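(* Let $L\ge2$, $D\ge 1$ be integers and for $k\in\mathbb{R}$ let \[ \operatorname{ELB}(k;L,D)=\log\left(L-1+\exp\left(2D^{k-\frac12}\right)\right)-\frac{2D^{k-\frac12}\exp\left(2D^{k-\frac12}\right)}{L-1+\exp\left(2D^{k-\frac12}\right)}. \] Then $\operatorname{ELB}(k;L,D)$ is a monotonically decreasing function of $k$, and it is bounded between $0$ and $\log L$.
   Context: $\log$ is the natural logarithm. (The proof treats $D>1$ implicitly so that $D^{k-1/2}$ is increasing in $k$.) *)

From Stdlib Require Import Reals.
Open Scope R_scope.

Definition ELB (L D : nat) (k : R) : R :=
  let t := 2 * Rpower (INR D) (k - 1/2) in
  ln (INR L - 1 + exp t) - t * exp t / (INR L - 1 + exp t).

From Stdlib Require Import Reals Lra.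
From Coquelicot Require Import Coquelicot.
Open Scope R_scope.

(* With a = L - 1 and t = 2 D^(k-1/2), ELB is the function
   g(t) = ln (a + e^t) - t e^t / (a + e^t), whose derivative is
   -a t e^t / (a + e^t)^2 <= 0 for t >= 0.  Since t > 0 grows with k, ELB is
   nonincreasing in k; the upper bound is g(0) = ln L, and the lower bound
   follows from ln (a + e^t) >= t >= t e^t / (a + e^t). *)

Definition elb_profile (a t : R) : R :=
  ln (a + exp t) - t * exp t / (a + exp t).

Lemma ELB_elb_profile (L D : nat) (k : R) :
  ELB L D k = elb_profile (INR L - 1) (2 * Rpower (INR D) (k - 1/2)).
Proof. reflexivity. Qed.

Lemma elb_profile_0 (a : R) : elb_profile a 0 = ln (a + 1).
Proof. unfold elb_profile; rewrite exp_0; unfold Rdiv; ring. Qed.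

Lemma derivable_pt_lim_elb_profile (a t : R) : 0 <= a ->
  derivable_pt_lim (elb_profile a) t (- (a * t * exp t) / (a + exp t) ^ 2).
Proof.
  intros ha.
  assert (He := exp_pos t).
  apply is_derive_Reals; unfold elb_profile.
  auto_derive; [lra | field; lra].
Qed.

Lemma elb_profile_nonincreasing (a x y : R) : 0 <= a -> 0 <= x <= y ->
  elb_profile a y <= elb_profile a x.
Proof.
  intros ha [hx hxy].
  destruct (Rle_lt_or_eq_dec _ _ hxy) as [hlt | ->]; [| lra].
  destruct (MVT_cor2 (elb_profile a)
              (fun c => - (a * c * exp c) / (a + exp c) ^ 2) x y hlt)
    as [c [Hmvt Hc]].
  { intros c _; apply derivable_pt_lim_elb_profile, ha. }
  assert (He := exp_pos c).
  assert (Hslope : 0 <= (a * c * exp c) / (a + exp c) ^ 2).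
  { apply Rdiv_le_0_compat; [| apply pow_lt; lra].
    apply Rmult_le_pos; [apply Rmult_le_pos |]; lra. }
  unfold Rdiv in Hmvt, Hslope.
  nra.
Qed.

Lemma elb_profile_ge0 (a t : R) : 0 <= a -> 0 <= t -> 0 <= elb_profile a t.
Proof.
  intros ha ht.
  assert (He := exp_pos t).
  assert (Hln : t <= ln (a + exp t)).
  { rewrite <- (ln_exp t) at 1; apply ln_le; lra. }
  assert (Hfrac : t * exp t / (a + exp t) <= t).
  { apply Rmult_le_reg_r with (a + exp t); [lra |].
    unfold Rdiv; rewrite Rmult_assoc, Rinv_l by lra; nra. }
  unfold elb_profile; lra.
Qed.

Theorem mainTheorem3 (L D : nat) (hL : (2 <= L)%nat) (hD : (1 <= D)%nat) :
  (forall k1 k2 : R, k1 <= k2 -> ELB L D k2 <= ELB L D k1) /\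
  (forall k : R, 0 <= ELB L D k <= ln (INR L)).
Proof.
  assert (ha : 0 <= INR L - 1) by (apply le_INR in hL; simpl in hL; lra).
  assert (HD : 1 <= INR D) by (apply le_INR in hD; simpl in hD; lra).
  assert (Ht : forall k, 0 <= 2 * Rpower (INR D) (k - 1/2)).
  { intros k; unfold Rpower; assert (H := exp_pos ((k - 1/2) * ln (INR D))); lra. }
  split.
  - intros k1 k2 hk; rewrite !ELB_elb_profile.
    apply elb_profile_nonincreasing; [exact ha | split; [apply Ht |]].
    apply Rmult_le_compat_l; [lra | apply Rle_Rpower; lra].
  - intros k; rewrite ELB_elb_profile; split.
    + apply elb_profile_ge0; [exact ha | apply Ht].
    + replace (ln (INR L)) with (elb_profile (INR L - 1) 0)
        by (rewrite elb_profile_0; f_equal; ring).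
      apply elb_profile_nonincreasing; [exact ha | split; [lra | apply Ht]].
Qed.
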